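(* Let $S$ be a commutative ring and $p,q\in S$. (1) If $c\in V[p,q]$, then there exist $x,y,z\in S$ with $px+qy=-c$ and $xy-z^2=-c^2$; there also exist $x_1,y_1,z_1\in S$ with $px_1+qy_1=c$ and $x_1y_1-z_1^2=-c^2$. (2) If $V[p,q]$ contains a unit of $S$, then there exist $x_2,y_2,z_2\in S$ with $px_2+qy_2=x_2y_2-z_2^2=-1$.
   Context: $V[p,q]=\{pr_1^2+qr_2^2: r_1,r_2\in S\}$. *)

From HB Require Import structures.
From mathcomp Require Import all_boot all_order all_algebra.
Set Implicit Arguments. Unset Strict Implicit. Unset Printing Implicit Defensive.
Import GRing.Theory.
Local Open Scope ring_scope.

Definition inV (S : comPzRingType) (p q c : S) : Prop :=
  exists r1 r2 : S, c = p * r1 ^+ 2 + q * r2 ^+ 2.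

(* c is a unit of S (S need not carry a computable inverse structure) *)
Definition is_unit_of (S : comPzRingType) (c : S) : Prop :=
  exists d : S, c * d = 1.

From HB Require Import structures.
From mathcomp Require Import all_boot all_order all_algebra.
From mathcomp Require Import ring.
Set Implicit Arguments. Unset Strict Implicit. Unset Printing Implicit Defensive.
Import GRing.Theory.
Local Open Scope ring_scope.

(* Every element c = p a^2 + q b^2 of V[p,q] solves the system through an explicit polynomial
   witness; the solution set is stable under scaling (x, y, z) by t, which moves c to t c.
   Scaling by -1 turns c into -c, and scaling by the negated inverse of a unit u in V[p,q]
   turns u into -1. *)

Section NormFormSolutions.
Variables (S : comPzRingType) (p q : S).

Definition norm_form_solvable (c : S) : Prop :=
  exists x y z : S, p * x + q * y = c /\ x * y - z ^+ 2 = - c ^+ 2.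

Lemma norm_form_solvableZ (t c : S) :
  norm_form_solvable c -> norm_form_solvable (t * c).
Proof.
move=> [x [y [z [e1 e2]]]]; exists (t * x), (t * y), (t * z); split.
  by rewrite -e1; ring.
have -> : t * x * (t * y) - (t * z) ^+ 2 = t ^+ 2 * (x * y - z ^+ 2) by ring.
by rewrite e2; ring.
Qed.

Lemma norm_form_solvable_sumsq (a b : S) :
  norm_form_solvable (p * a ^+ 2 + q * b ^+ 2).
Proof.
exists (a ^+ 2 + 2 * a * q * b), (b ^+ 2 - 2 * p * a * b),
  (a * b - p * a ^+ 2 + q * b ^+ 2).
by split; ring.
Qed.

Lemma norm_form_solvable_inV (c : S) : inV p q c -> norm_form_solvable c.
Proof. by move=> [a [b ->]]; apply: norm_form_solvable_sumsq. Qed.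

Lemma norm_form_solvableN (c : S) :
  norm_form_solvable c -> norm_form_solvable (- c).
Proof. by move=> /(norm_form_solvableZ (-1)); rewrite mulN1r. Qed.

End NormFormSolutions.

Theorem corollary6p17 (S : comPzRingType) (p q : S) :
  (forall c : S, inV p q c ->
     (exists x y z : S, p * x + q * y = - c /\ x * y - z ^+ 2 = - c ^+ 2) /\
     (exists x1 y1 z1 : S, p * x1 + q * y1 = c /\ x1 * y1 - z1 ^+ 2 = - c ^+ 2)) /\
  ((exists u : S, inV p q u /\ is_unit_of u) ->
     exists x2 y2 z2 : S, p * x2 + q * y2 = -1 /\ x2 * y2 - z2 ^+ 2 = -1).
Proof.
split=> [c /norm_form_solvable_inV hc|[u [/norm_form_solvable_inV hu [d hud]]]].
  by split=> //; move: (norm_form_solvableN hc); rewrite /norm_form_solvable sqrrN.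
have := norm_form_solvableZ (- d) hu.
by rewrite mulNr mulrC hud /norm_form_solvable sqrrN expr1n.
Qed.
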